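(* Let $G=(V(G),E(G))$ be a finite connected graph with $N$ vertices, and attach to each vertex an $N$-level system $\mathbb{C}^N$. Let $H=\sum_{(i,j)\in E(G)}J_{ij}P_{ij}$ with all couplings $J_{ij}>0$. Then the ground state of $H$ is the $N$-singlet $|S^{(N)}_N\rangle$.
   Context: $P_{ij}$ is the swap operator on $(\mathbb{C}^N)^{\otimes N}$ exchanging tensor factors $i$ and $j$. Fix an orthonormal basis $\{|\alpha_k\rangle\}_{k=1}^N$ of $\mathbb{C}^N$. The $N$-singlet is $$|S^{(N)}_N\rangle=\frac{1}{\sqrt{N!}}\sum_{\pi\in S_N}\operatorname{sgn}(\pi)\,|\alpha_{\pi(1)},\dots,\alpha_{\pi(N)}\rangle,$$ the totally antisymmetric state: it satisfies $P_{ij}|S^{(N)}_N\rangle=-|S^{(N)}_N\rangle$ for all $i\ne j$. Up to a global phase it does not depend on the chosen basis, and $U^{\otimes N}|S^{(N)}_N\rangle=|S^{(N)}_N\rangle$ up to a phase for every unitary $U$ on $\mathbb{C}^N$. *)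

From HB Require Import structures.
From mathcomp Require Import all_boot all_order all_algebra all_fingroup.
Set Implicit Arguments. Unset Strict Implicit. Unset Printing Implicit Defensive.
Import Order.TTheory GRing.Theory Num.Theory.
Local Open Scope ring_scope.

(* A computational basis configuration of (C^N)^{\otimes N}:
   site k (k : 'I_N) is in level c k (the basis vector alpha_{c k}). *)
Definition config (N : nat) := {ffun 'I_N -> 'I_N}.

(* States are row vectors indexed by (an enumeration of) the configurations. *)
Notation dimH N := #|config N|.

Definition swapc (N : nat) (i j : 'I_N) (c : config N) : config N :=
  [ffun k => c (tperm i j k)].

(* The swap operator P_ij as a matrix (acting on row vectors by v *m P). *)
Definition swap_mx (C : numClosedFieldType) (N : nat) (i j : 'I_N)
  : 'M[C]_(dimH N) :=
  \matrix_(x, y) ((enum_val y == swapc i j (enum_val x))%:R).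

(* H = sum over edges {i,j} (each unordered edge once, i < j) of J_ij P_ij. *)
Definition hamiltonian (C : numClosedFieldType) (N : nat) (e : rel 'I_N)
  (J : 'I_N -> 'I_N -> C) : 'M[C]_(dimH N) :=
  \sum_(i < N) \sum_(j < N | (i < j)%N && e i j) J i j *: swap_mx C i j.

(* The N-singlet (1/sqrt(N!)) sum_pi sgn(pi) |alpha_{pi 1}, ..., alpha_{pi N}>,
   w.r.t. the standard basis alpha_k = e_k. *)
Definition singlet (C : numClosedFieldType) (N : nat) : 'rV[C]_(dimH N) :=
  \row_x ((sqrtC (N`!)%:R)^-1 *
          \sum_(s : 'S_N)
            (if enum_val x == [ffun k => s k] then (-1) ^+ odd_perm s else 0)).

Definition ground_state (C : numClosedFieldType) (n : nat) (H : 'M[C]_n)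
  (v : 'rV[C]_n) : Prop :=
  v != 0 /\ exists E : C, v *m H = E *: v /\ forall a, eigenvalue H a -> E <= a.

(** Since each [P_ij] permutes the basis and is an involution, an eigenvector
    [v H = a v] satisfies
      [2 (a + Σ J_ij) |v|^2 = Σ J_ij |v + v P_ij|^2 >= 0],
    so every eigenvalue is at least [-Σ J_ij], with equality exactly when
    [v P_ij = -v] on every edge.  Along a path [i - k - j] the transposition
    [(i j)] is the conjugate of [(k j)] by [(i k)], so connectivity makes such a
    [v] antisymmetric under every transposition, i.e. alternating under [S_N].
    An alternating function of a configuration vanishes unless the
    configuration is a permutation, so it is determined by its value at the
    identity: [v] is a multiple of the singlet, and the singlet does attain
    [-Σ J_ij]. *)

From HB Require Import structures.
From mathcomp Require Import all_boot all_order all_algebra all_fingroup.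
Import Order.TTheory GRing.Theory Num.Theory.
Local Open Scope ring_scope.
Set Implicit Arguments. Unset Strict Implicit. Unset Printing Implicit Defensive.

Section SquaredNorm.

Variables (C : numClosedFieldType) (T : finType).
Implicit Types (f : T -> C) (s : T -> T).

Definition sqnorm f : C := \sum_x f x * (f x)^*.

Lemma sqnorm_ge0 f : 0 <= sqnorm f.
Proof. by apply: sumr_ge0 => x _; apply: mul_conjC_ge0. Qed.

Lemma sqnorm_eq0 f x : sqnorm f = 0 -> f x = 0.
Proof.
move=> f0; apply/eqP; rewrite -mul_conjC_eq0; apply/eqP.
by apply: (psumr_eq0P _ f0) => // y _; apply: mul_conjC_ge0.
Qed.

Lemma sqnorm_gt0 f x : f x != 0 -> 0 < sqnorm f.
Proof.
move=> fx0; rewrite lt_def sqnorm_ge0 andbT.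
by apply: contra fx0 => /eqP/sqnorm_eq0 ->.
Qed.

Lemma sqnormD_involution f s :
  involutive s ->
  sqnorm (fun x => f x + f (s x)) = 2 * (sqnorm f + \sum_x f (s x) * (f x)^*).
Proof.
move=> sK; have s_inj := can_inj sK.
have sqnorm_s : \sum_x f (s x) * (f (s x))^* = sqnorm f.
  by rewrite [RHS](reindex_inj s_inj).
have cross_s : \sum_x f x * (f (s x))^* = \sum_x f (s x) * (f x)^*.
  by rewrite (reindex_inj s_inj); apply: eq_bigr => x _; rewrite sK.
rewrite /sqnorm; under eq_bigr do rewrite rmorphD /= mulrDl !mulrDr.
rewrite !big_split /= sqnorm_s cross_s -/(sqnorm f).
by rewrite mulr2n mulrDl !mul1r [_ + sqnorm f]addrC.
Qed.

End SquaredNorm.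

Section InvolutionCombination.

Variables (C : numClosedFieldType) (T I : finType) (P : pred I).
Variables (w : I -> C) (s : I -> T -> T).
Hypothesis sK : forall k, involutive (s k).
Variables (f : T -> C) (a : C).
Hypothesis f_eigen : forall x, a * f x = \sum_(k | P k) w k * f (s k x).

Lemma eigen_sqnorm_identity :
  2 * ((a + \sum_(k | P k) w k) * sqnorm f) =
  \sum_(k | P k) w k * sqnorm (fun x => f x + f (s k x)).
Proof.
under [RHS]eq_bigr do rewrite sqnormD_involution // mulrCA mulrDr.
rewrite -mulr_sumr big_split /= -mulr_suml; congr (_ * _).
rewrite mulrDl addrC; congr (_ + _).
rewrite /sqnorm mulr_sumr.
under [LHS]eq_bigr do rewrite mulrA f_eigen mulr_suml.
rewrite exchange_big; apply: eq_bigr => k _.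
by rewrite mulr_sumr; apply: eq_bigr => x _; rewrite mulrA.
Qed.

Hypothesis w_gt0 : forall k, P k -> 0 < w k.

Lemma symmetrized_term_ge0 k : P k -> 0 <= w k * sqnorm (fun x => f x + f (s k x)).
Proof. by move=> Pk; rewrite mulr_ge0 ?sqnorm_ge0 // ltW ?w_gt0. Qed.

Lemma eigen_ge_neg_weight x : f x != 0 -> - \sum_(k | P k) w k <= a.
Proof.
move=> fx0; have := sumr_ge0 (index_enum I) symmetrized_term_ge0.
rewrite -eigen_sqnorm_identity.
rewrite (pmulr_rge0 _ (ltr0n _ 2)) (pmulr_lge0 _ (sqnorm_gt0 fx0)).
by move=> ?; rewrite -subr_ge0 opprK.
Qed.

Lemma eigen_neg_weight_antisym :
  a = - \sum_(k | P k) w k -> forall k x, P k -> f (s k x) = - f x.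
Proof.
move=> a_min k x Pk; apply/eqP; rewrite -addr_eq0 addrC; apply/eqP.
have := eigen_sqnorm_identity; rewrite a_min addNr mul0r mulr0 => /esym.
move/(psumr_eq0P symmetrized_term_ge0).
move/(_ k Pk)/eqP; rewrite mulf_eq0 gt_eqF ?w_gt0 //= => /eqP.
exact: sqnorm_eq0.
Qed.

End InvolutionCombination.

Lemma connect_rel_ind (T : finType) (e : rel T) (R : T -> T -> Prop) :
  (forall x, R x x) -> (forall x y z, R x y -> R y z -> R x z) ->
  (forall x y, e x y -> R x y) -> forall x y, connect e x y -> R x y.
Proof.
move=> R_refl R_trans eR x _ /connectP[p + ->].
elim: p x => [|y p IH] x //=.
by case/andP=> /eR Rxy /IH; apply: R_trans.
Qed.

Definition permc N (s : 'S_N) (c : config N) : config N := [ffun k => c (s k)].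

Definition idc N : config N := [ffun k => k].

Lemma swapcE N (i j : 'I_N) c : swapc i j c = permc (tperm i j) c.
Proof. by []. Qed.

Lemma permc1 N (c : config N) : permc 1 c = c.
Proof. by apply/ffunP => k; rewrite ffunE perm1. Qed.

Lemma permcM N (s t : 'S_N) c : permc (s * t) c = permc s (permc t c).
Proof. by apply/ffunP => k; rewrite !ffunE permM. Qed.

Lemma permcK N (s : 'S_N) : cancel (permc s) (permc s^-1).
Proof. by move=> c; rewrite -permcM mulVg permc1. Qed.

Lemma permc_idc N (s : 'S_N) : permc s (idc N) = [ffun k => s k].
Proof. by apply/ffunP => k; rewrite !ffunE. Qed.

Lemma swapcK N (i j : 'I_N) : involutive (swapc i j).
Proof. by move=> c; rewrite !swapcE -permcM tperm2 permc1. Qed.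

Lemma perm_ffun_inj N : injective (fun s : 'S_N => [ffun k => s k] : config N).
Proof. by move=> s t /ffunP st; apply/permP => k; have := st k; rewrite !ffunE. Qed.

Section Alternating.

Variables (C : numClosedFieldType) (N : nat).
Implicit Types (g h : config N -> C) (s t : 'S_N) (c : config N).

Definition alternating_under g s : Prop :=
  forall c, g (permc s c) = (-1) ^+ odd_perm s * g c.

Lemma alternating_under1 g : alternating_under g 1.
Proof. by move=> c; rewrite permc1 odd_perm1 mul1r. Qed.

Lemma alternating_underM g s t :
  alternating_under g s -> alternating_under g t -> alternating_under g (s * t).
Proof.
by move=> gs gt c; rewrite permcM gs gt odd_permM signr_addb mulrA.
Qed.

Lemma alternating_under_tperm_trans g (x y z : 'I_N) :
  alternating_under g (tperm x y) -> alternating_under g (tperm y z) ->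
  alternating_under g (tperm x z).
Proof.
have [<- //|xy] := eqVneq x y; have [<- //|yz] := eqVneq y z.
have [<- _ _|xz gxy gyz] := eqVneq x z.
  by rewrite tperm1; apply: alternating_under1.
have <- : (tperm x y * tperm y z * tperm x y)%g = tperm x z.
  by rewrite -(tpermJ_tperm yz xz) conjgE tpermV [tperm y x]tpermC mulgA.
by do 2?apply: alternating_underM.
Qed.

Lemma alternating_under_all g :
  (forall i j, alternating_under g (tperm i j)) -> forall s, alternating_under g s.
Proof.
move=> g_tperm s; case: (prod_tpermP s) => ts -> _.
elim: ts => [|t ts IH]; first by rewrite big_nil; apply: alternating_under1.
by rewrite big_cons; apply: alternating_underM.
Qed.

Lemma alternating_noninj g c :
  (forall s, alternating_under g s) -> ~~ injectiveb c -> g c = 0.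
Proof.
move=> g_alt /injectivePn[i [j ij cij]].
have fixed : permc (tperm i j) c = c.
  by apply/ffunP => k; rewrite ffunE; case: tpermP => // ->.
have := g_alt (tperm i j) c; rewrite fixed odd_tperm ij expr1 mulN1r => /eqP.
by rewrite -subr_eq0 opprK -mulr2n mulrn_eq0 => /eqP.
Qed.

Lemma alternating_proportional g h c :
  (forall s, alternating_under g s) -> (forall s, alternating_under h s) ->
  g c * h (idc N) = h c * g (idc N).
Proof.
move=> g_alt h_alt; have [/injectiveP c_inj|c_ninj] := boolP (injectiveb c).
  have -> : c = permc (perm c_inj) (idc N).
    by apply/ffunP => k; rewrite !ffunE permE.
  by rewrite g_alt h_alt mulrAC.
by rewrite !(alternating_noninj _ c_ninj) ?mul0r.
Qed.

Definition perm_sign c : C :=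
  \sum_(s : 'S_N) (if c == [ffun k => s k] then (-1) ^+ odd_perm s else 0).

Lemma perm_sign_idc : perm_sign (idc N) = 1.
Proof.
have idc1 : idc N = [ffun k => (1%g : 'S_N) k] by rewrite -permc_idc permc1.
rewrite /perm_sign (bigD1 1%g) //= idc1 eqxx odd_perm1 big1 ?addr0 // => s s1.
by rewrite (inj_eq (@perm_ffun_inj N)) eq_sym (negbTE s1).
Qed.

Lemma alternating_perm_sign s : alternating_under perm_sign s.
Proof.
move=> c; rewrite /perm_sign (reindex_inj (mulgI s)) mulr_sumr; apply: eq_bigr => t _.
rewrite -!permc_idc permcM (inj_eq (can_inj (permcK s))) odd_permM signr_addb.
by case: ifP; rewrite ?mulr0.
Qed.

Lemma alternating_under_connect (e : rel 'I_N) g :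
  (forall i j, e i j -> alternating_under g (tperm i j)) ->
  forall x y, connect e x y -> alternating_under g (tperm x y).
Proof.
move=> g_edge; apply: connect_rel_ind => [x||//].
  by rewrite tperm1; apply: alternating_under1.
exact: alternating_under_tperm_trans.
Qed.

End Alternating.

Section RowVectors.

Variables (C : numClosedFieldType) (N : nat).
Implicit Types (v w : 'rV[C]_(dimH N)) (c : config N).

Definition coord v c : C := v 0 (enum_rank c).

Lemma coordZ a v c : coord (a *: v) c = a * coord v c.
Proof. by rewrite /coord mxE. Qed.

Lemma coordP v w : (forall c, coord v c = coord w c) -> v = w.
Proof. by move=> vw; apply/rowP => x; rewrite -[x]enum_valK; apply: vw. Qed.

Lemma exists_coord_neq0 v : v != 0 -> exists c, coord v c != 0.
Proof.
move=> v_neq0; case: (pickP (fun c => coord v c != 0)) => [c vc|v0]; first by exists c.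
case/eqP: v_neq0; apply: coordP => c.
by move/negbFE/eqP: (v0 c) ->; rewrite /coord mxE.
Qed.

Lemma coord_swap_mx v (i j : 'I_N) c :
  coord (v *m swap_mx C i j) c = coord v (swapc i j c).
Proof.
rewrite /coord mxE (bigD1 (enum_rank (swapc i j c))) //= mxE !enum_rankK.
rewrite swapcK eqxx mulr1 big1 ?addr0 // => x x_ne; rewrite mxE enum_rankK.
case: eqP => [c_def|]; last by rewrite mulr0.
by move: x_ne; rewrite c_def swapcK enum_valK eqxx.
Qed.

Lemma coord_singlet c : coord (singlet C N) c = (sqrtC (N`!)%:R)^-1 * perm_sign C c.
Proof. by rewrite /coord mxE enum_rankK. Qed.

Lemma sqrt_fact_neq0 : sqrtC (N`!)%:R != 0 :> C.
Proof. by rewrite sqrtC_eq0 pnatr_eq0 -lt0n fact_gt0. Qed.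

Lemma singlet_neq0 : singlet C N != 0.
Proof.
apply: contraTneq isT => s0; have := coord_singlet (idc N).
rewrite s0 /coord mxE perm_sign_idc mulr1 => /esym/eqP.
by rewrite invr_eq0 (negbTE sqrt_fact_neq0).
Qed.

Lemma alternating_coord_singlet s : alternating_under (coord (singlet C N)) s.
Proof. by move=> c; rewrite !coord_singlet alternating_perm_sign mulrCA. Qed.

Lemma alternating_coordE v :
  (forall s, alternating_under (coord v) s) ->
  v = (coord v (idc N) * sqrtC (N`!)%:R) *: singlet C N.
Proof.
move=> v_alt; apply: coordP => c; rewrite coordZ coord_singlet.
have := alternating_proportional c v_alt (@alternating_perm_sign C N).
rewrite perm_sign_idc mulr1 => ->.
by rewrite mulrC -mulrA mulVKf ?sqrt_fact_neq0.
Qed.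

End RowVectors.

Section Hamiltonian.

Variables (C : numClosedFieldType) (N : nat) (e : rel 'I_N) (J : 'I_N -> 'I_N -> C).
Hypothesis J_pos : forall i j, e i j -> 0 < J i j.
Implicit Types (v : 'rV[C]_(dimH N)) (c : config N).

Definition oriented_edge : pred ('I_N * 'I_N) := fun p => (p.1 < p.2)%N && e p.1 p.2.

Definition ground_energy : C := - \sum_(p | oriented_edge p) J p.1 p.2.

Lemma coord_hamiltonian v c :
  coord (v *m hamiltonian e J) c =
  \sum_(p | oriented_edge p) J p.1 p.2 * coord v (swapc p.1 p.2 c).
Proof.
rewrite /hamiltonian pair_big_dep mulmx_sumr /coord summxE.
apply: eq_bigr => p _; rewrite -scalemxAr mxE.
by have := coord_swap_mx v p.1 p.2 c; rewrite /coord => ->.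
Qed.

Lemma eigenvector_coord v a (v_eigen : v *m hamiltonian e J = a *: v) c :
  a * coord v c = \sum_(p | oriented_edge p) J p.1 p.2 * coord v (swapc p.1 p.2 c).
Proof. by rewrite -coordZ -v_eigen coord_hamiltonian. Qed.

Lemma oriented_edge_weight_gt0 p : oriented_edge p -> 0 < J p.1 p.2.
Proof. by case/andP=> _; apply: J_pos. Qed.

Lemma hamiltonian_eigenvalue_ge v a :
  v != 0 -> v *m hamiltonian e J = a *: v -> ground_energy <= a.
Proof.
move=> /exists_coord_neq0[c vc] v_eigen.
exact: (eigen_ge_neg_weight (fun p => swapcK p.1 p.2) (eigenvector_coord v_eigen)
         oriented_edge_weight_gt0 vc).
Qed.

Lemma alternating_eigenvector v :
  (forall s, alternating_under (coord v) s) ->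
  v *m hamiltonian e J = ground_energy *: v.
Proof.
move=> v_alt; apply: coordP => c.
rewrite coord_hamiltonian coordZ /ground_energy mulNr mulr_suml -sumrN.
apply: eq_bigr => p /andP[lt_p _]; have p_neq : p.1 != p.2 by rewrite neq_ltn lt_p.
by rewrite swapcE v_alt odd_tperm p_neq expr1 mulN1r !mulrN.
Qed.

Lemma singlet_eigenvector :
  singlet C N *m hamiltonian e J = ground_energy *: singlet C N.
Proof. exact/alternating_eigenvector/alternating_coord_singlet. Qed.

Hypothesis e_sym : symmetric e.
Hypothesis e_conn : forall x y : 'I_N, connect e x y.

Lemma ground_eigenvector_alternating v :
  v *m hamiltonian e J = ground_energy *: v ->
  forall s, alternating_under (coord v) s.
Proof.
move=> v_ground; apply: alternating_under_all => x y.
apply: (alternating_under_connect _ (e_conn x y)) => i j eij.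
have edge_swap p : oriented_edge p -> alternating_under (coord v) (tperm p.1 p.2).
  move=> p_edge c; have p_neq : p.1 != p.2 by rewrite neq_ltn (andP p_edge).1.
  rewrite odd_tperm p_neq expr1 mulN1r -swapcE.
  exact: (eigen_neg_weight_antisym (fun p => swapcK p.1 p.2)
            (eigenvector_coord v_ground) oriented_edge_weight_gt0 erefl).
case: (ltngtP i j) => [ij|ji|/val_inj <-].
- by apply: (edge_swap (i, j)); rewrite /oriented_edge /= ij eij.
- by rewrite tpermC; apply: (edge_swap (j, i)); rewrite /oriented_edge /= ji e_sym.
- by rewrite tperm1; apply: alternating_under1.
Qed.

End Hamiltonian.

Unset Implicit Arguments. Set Strict Implicit.

Theorem theorem1 (C : numClosedFieldType) (N : nat) (HN : (0 < N)%N)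
  (e : rel 'I_N) (e_sym : symmetric e) (e_irr : irreflexive e)
  (e_conn : forall x y : 'I_N, connect e x y)
  (J : 'I_N -> 'I_N -> C) (J_pos : forall i j, e i j -> 0 < J i j) :
  forall v : 'rV[C]_(dimH N),
    ground_state (hamiltonian e J) v <->
    exists c : C, c != 0 /\ v = c *: singlet C N.
Proof.
move=> v; split.
  case=> v_neq0 [E [v_eigen E_min]].
  have E_ground : E = ground_energy e J.
    apply/le_anti; rewrite (hamiltonian_eigenvalue_ge J_pos v_neq0 v_eigen) andbT.
    by apply/E_min/eigenvalueP; exists (singlet C N);
      [exact: singlet_eigenvector | exact: singlet_neq0].
  rewrite E_ground in v_eigen.
  have v_alt := ground_eigenvector_alternating J_pos e_sym e_conn v_eigen.
  have v_def := alternating_coordE v_alt.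
  exists (coord v (idc N) * sqrtC (N`!)%:R); split=> //.
  by apply: contra v_neq0 => /eqP k0; rewrite v_def k0 scale0r.
case=> k [k_neq0 ->]; split; first by rewrite scaler_eq0 negb_or k_neq0 singlet_neq0.
exists (ground_energy e J); split.
  by rewrite -scalemxAl singlet_eigenvector !scalerA mulrC.
move=> a /eigenvalueP[w w_eigen w_neq0].
exact: (hamiltonian_eigenvalue_ge J_pos w_neq0 w_eigen).
Qed.
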